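(* Let $V$ be a finite dimensional real vector space and let $\Delta \subset V \setminus \{0\}$ satisfy $\Delta = -\Delta$. Then every strongly parabolic subset of $\Delta$ is a parabolic subset of $\Delta$.
   Context: A subset $P \subset \Delta$ is called parabolic if (1) $\Delta = P \cup -P$, and (2) whenever $\alpha, \beta \in P$ and $\alpha+\beta \in \Delta$, then $\alpha+\beta \in P$. A partition $\Delta = \Delta^- \sqcup \Delta^0 \sqcup \Delta^+$ is called a triangular decomposition of $\Delta$ if there is a linear function $\lambda \in V^*$ with $\Delta^0 = \Delta \cap \ker \lambda$ and $\Delta^{\pm} = \{\alpha \in \Delta \mid \lambda(\alpha) \gtrless 0\}$. A subset $P \subset \Delta$ is called strongly parabolic (defined recursively) if $P = \Delta$, or $P = P^0 \sqcup \Delta^+$ for some triangular decomposition $\Delta = \Delta^- \sqcup \Delta^0 \sqcup \Delta^+$ (with linear function $\lambda$) and some subset $P^0 \subset \Delta^0$ that is strongly parabolic as a subset of $\Delta^0$ regarded inside the vector space $\ker \lambda$. *)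

From HB Require Import structures.
From mathcomp Require Import all_boot all_order all_algebra.
From mathcomp Require Import reals.
Set Implicit Arguments. Unset Strict Implicit. Unset Printing Implicit Defensive.
Import Order.TTheory GRing.Theory Num.Theory.
Local Open Scope ring_scope.

Section Parabolic.
Variables (R : realType) (V : vectType R).

Definition parabolic (D P : V -> Prop) : Prop :=
  (forall x, D x <-> (P x \/ P (- x))) /\
  (forall a b, P a -> P b -> D (a + b) -> P (a + b)).

(* A triangular
   decomposition of D is given by a linear form l : V -> R; its zero part is
   D^0 = D n ker l and its positive part is D^+ = {a in D | l a > 0}.
   The recursion on D^0 (regarded inside ker l) uses linear forms on V; every
   linear form on the subspace ker l is the restriction of one on V, and they
   induce the same decompositions of D^0. *)
Inductive strongly_parabolic : (V -> Prop) -> (V -> Prop) -> Prop :=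
| sp_full (D P : V -> Prop) :
    (forall x, P x <-> D x) -> strongly_parabolic D P
| sp_step (D P P0 : V -> Prop) (l : {linear V -> R^o}) :
    strongly_parabolic (fun x => D x /\ l x = 0) P0 ->
    (forall x, P x <-> (P0 x \/ (D x /\ 0 < l x))) ->
    strongly_parabolic D P.

End Parabolic.

From HB Require Import structures.
From mathcomp Require Import all_boot all_order all_algebra.
From mathcomp Require Import reals.
Set Implicit Arguments. Unset Strict Implicit. Unset Printing Implicit Defensive.
Import Order.TTheory GRing.Theory Num.Theory.
Local Open Scope ring_scope.

(* For P = P^0 u D^+ with l the
   linear form of the decomposition: l >= 0 on P, and l > 0 exactly on D^+.
   Hence D = P u -P splits according to the sign of l, the zero part being
   covered by P^0 u -P^0.  For closure, if l (a + b) > 0 then a + b lies in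
   D^+; if l (a + b) = 0 then l a = l b = 0, so a and b lie in P^0 and the
   closure of P^0 inside D^0 applies. *)

Section StronglyParabolic.
Variables (R : realType) (V : vectType R).

Definition symmetric (D : V -> Prop) : Prop := forall x, D x <-> D (- x).

Lemma symmetric_kernel (D : V -> Prop) (l : {linear V -> R^o}) :
  symmetric D -> symmetric (fun x => D x /\ l x = 0).
Proof.
move=> Dsym x; rewrite linearN /= -Dsym; split=> -[Dx /eqP lx]; split=> //.
  by apply/eqP; rewrite oppr_eq0.
by apply/eqP; rewrite -oppr_eq0.
Qed.

Lemma parabolic_full (D P : V -> Prop) :
  symmetric D -> (forall x, P x <-> D x) -> parabolic D P.
Proof.
move=> Dsym PD; split=> [x|a b _ _ /PD //].
by rewrite !PD -Dsym; tauto.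
Qed.

Lemma parabolic_step (D P P0 : V -> Prop) (l : {linear V -> R^o}) :
  symmetric D -> parabolic (fun x => D x /\ l x = 0) P0 ->
  (forall x, P x <-> (P0 x \/ (D x /\ 0 < l x))) ->
  parabolic D P.
Proof.
move=> Dsym [P0sym P0closed] PE.
have P0_ker x : P0 x -> D x /\ l x = 0 by move=> P0x; apply/P0sym; left.
have P_D x : P x -> D x by case/PE=> [/P0_ker[]|[]].
have P_ge0 x : P x -> 0 <= l x by case/PE=> [/P0_ker[_ ->]|[_ /ltW]].
split=> [x|a b Pa Pb Dab].
  split=> [Dx|[/P_D //|/P_D]]; last by rewrite -Dsym.
  have [lx_lt0|lx_gt0|lx0] := ltgtP (l x) 0.
  - by right; apply/PE; right; rewrite -Dsym linearN /= oppr_gt0.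
  - by left; apply/PE; right.
  - have [P0x|P0Nx] := proj1 (P0sym x) (conj Dx lx0).
      by left; apply/PE; left.
    by right; apply/PE; left.
have [la lb] := (P_ge0 _ Pa, P_ge0 _ Pb).
apply/PE; have := addr_ge0 la lb; rewrite -linearD le_eqVlt.
case/orP=> [/eqP lab0|]; last by right.
have /andP[/eqP la0 /eqP lb0] : (l a == 0) && (l b == 0).
  by rewrite -paddr_eq0 // -linearD lab0.
have P0_of_kernel x : P x -> l x = 0 -> P0 x.
  by move=> /PE[//|[_]] + lx0; rewrite lx0 ltxx.
by left; apply: P0closed; [exact: P0_of_kernel|exact: P0_of_kernel|split].
Qed.

End StronglyParabolic.

Theorem proposition1p2 (R : realType) (V : vectType R) (D : V -> Prop)
  (hD0 : forall x, D x -> x != 0)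
  (hDsym : forall x, D x <-> D (- x))
  (P : V -> Prop) :
  strongly_parabolic D P -> parabolic D P.
Proof.
move=> sp; elim: sp hDsym => {D P hD0} [D P PD|D P P0 l _ IH PE] Dsym.
  exact: parabolic_full.
exact: parabolic_step Dsym (IH (symmetric_kernel l Dsym)) PE.
Qed.
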